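(* Every $L\in\mathcal L(C_6)$ which is an interval (i.e. of the form $[a,b]$ with integers $a\le b$) lies in $\mathcal L(C_2^5)$.
   Context: $C_n$ denotes a cyclic group of order $n$ and $C_2^r$ an elementary abelian $2$-group of rank $r$; $[a,b]=\{x\in\mathbb Z:a\le x\le b\}$. For a subset $G_0$ of a finite abelian group $G$, a sequence over $G_0$ is an element of the free abelian monoid $\mathcal F(G_0)$ with basis $G_0$ (a finite unordered list of elements of $G_0$, repetitions allowed). $\mathcal B(G_0)$ is the monoid of zero-sum sequences over $G_0$ (including the empty sequence). An atom is a minimal zero-sum sequence, i.e. a nonempty zero-sum sequence that is not a product of two nonempty zero-sum sequences. For $B\in\mathcal B(G_0)$, $\mathsf L(B)=\{k\in\mathbb N_0: B \text{ is a product of } k \text{ atoms}\}$, and $\mathcal L(G_0)=\{\mathsf L(B):B\in\mathcal B(G_0)\}$; $\mathcal L(G)$ is the case $G_0=G$. *)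

From HB Require Import structures.
From mathcomp Require Import all_boot all_algebra.
Set Implicit Arguments. Unset Strict Implicit. Unset Printing Implicit Defensive.
Import GRing.Theory.
Local Open Scope ring_scope.

(* A sequence over a finite abelian group G (element of the free abelian
   monoid F(G)) is represented by its multiplicity function G -> nat. *)
Definition fseq (G : finZmodType) := {ffun G -> nat}.

Section ZS.
Variable G : finZmodType.

Definition fseq_mul (S T : fseq G) : fseq G := [ffun g => (S g + T g)%N].
Definition fseq_one : fseq G := [ffun _ => 0%N].
Definition fseq_prod (s : seq (fseq G)) : fseq G :=
  [ffun g => (\sum_(A <- s) A g)%N].

Definition fseq_len (S : fseq G) : nat := (\sum_(g : G) S g)%N.
Definition sigma (S : fseq G) : G := \sum_(g : G) g *+ S g.

Definition zero_sum (S : fseq G) : bool := sigma S == 0.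

Definition atom (A : fseq G) : Prop :=
  [/\ zero_sum A, A != fseq_one &
      forall U V : fseq G, zero_sum U -> zero_sum V -> A = fseq_mul U V ->
        U = fseq_one \/ V = fseq_one].

Definition in_length_set (B : fseq G) (k : nat) : Prop :=
  exists s : seq (fseq G), [/\ size s = k, (forall A, A \in s -> atom A) &
                                fseq_prod s = B].

Definition in_system_of_sets_of_lengths (L : nat -> Prop) : Prop :=
  exists B : fseq G, zero_sum B /\ forall k, L k <-> in_length_set B k.
End ZS.

(* In C_2^5 (exponent 2, 32 elements) atoms have length at most 6 by a
   pigeonhole argument on subset sums, atoms of length 2 are squares, and
   elements are coded by the naturals below 32 (addition = bitwise xor).  For a
   list T of nonzero codes in which some code occurs an odd number of times, the
   lengths of 0^v T lie strictly between v + |T|/6 - 1 and v + |T|/2, so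
   L(0^v T) is an interval as soon as all lengths in between are certified by
   explicit factorizations, checked by computation.  Six such blocks combined
   with powers of U = e1 e2 e3 e4 e5 (e1 + ... + e5) give every interval
   [a, b] with 2 <= a < b < 3a, and 0^v gives the singletons.

   In C_6 the 20 atoms are classified by computation on multiplicity vectors.
   Hence D(C_6) = 6, so b <= 3a for lengths a <= b of the same sequence; a <= 1
   forces B = 1 or B an atom; and b = 3a forces B onto {1, 5}, where all
   lengths are congruent modulo 4.  So an interval [a, b] in L(C_6) is a
   singleton or satisfies 2 <= a < b < 3a, and the main theorem follows. *)

From mathcomp Require Import all_boot all_algebra zify.
Set Implicit Arguments. Unset Strict Implicit. Unset Printing Implicit Defensive.
Import GRing.Theory.

Section FreeMonoid.
Variable G : finZmodType.
Implicit Types (A B U V : fseq G) (s : seq (fseq G)).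

Definition seq_of (t : seq G) : fseq G := [ffun g => count_mem g t].

Definition zero_atom : fseq G := seq_of [:: 0%R].

Lemma fseq_mulE U V g : fseq_mul U V g = (U g + V g)%N.
Proof. by rewrite ffunE. Qed.

Lemma fseq_mulf1 U : fseq_mul U (fseq_one G) = U.
Proof. by apply/ffunP => g; rewrite !ffunE addn0. Qed.

Lemma fseq_prod_nil : fseq_prod [::] = fseq_one G.
Proof. by apply/ffunP => g; rewrite !ffunE big_nil. Qed.

Lemma fseq_prod_cons A s : fseq_prod (A :: s) = fseq_mul A (fseq_prod s).
Proof. by apply/ffunP => g; rewrite !ffunE big_cons. Qed.

Lemma sigma_mul U V : sigma (fseq_mul U V) = (sigma U + sigma V)%R.
Proof. by rewrite /sigma -big_split; apply: eq_bigr => g _; rewrite ffunE mulrnDr. Qed.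

Lemma sigma_one : sigma (fseq_one G) = 0%R.
Proof. by rewrite /sigma big1 // => g _; rewrite ffunE. Qed.

Lemma len_mul U V : fseq_len (fseq_mul U V) = (fseq_len U + fseq_len V)%N.
Proof. by rewrite /fseq_len -big_split; apply: eq_bigr => g _; rewrite ffunE. Qed.

Lemma len_one : fseq_len (fseq_one G) = 0.
Proof. by rewrite /fseq_len big1 // => g _; rewrite ffunE. Qed.

Lemma len0_one U : fseq_len U = 0 -> U = fseq_one G.
Proof.
move/eqP; rewrite /fseq_len sum_nat_eq0 => /forallP U0.
by apply/ffunP => g; rewrite ffunE; apply/eqP; exact: implyP (U0 g) isT.
Qed.

Lemma seq_of_cat (t1 t2 : seq G) : seq_of (t1 ++ t2) = fseq_mul (seq_of t1) (seq_of t2).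
Proof. by apply/ffunP => g; rewrite !ffunE count_cat. Qed.

Lemma seq_of_perm (t1 t2 : seq G) : perm_eq t1 t2 -> seq_of t1 = seq_of t2.
Proof. by move/permP => e; apply/ffunP => g; rewrite !ffunE e. Qed.

Lemma sigma_seq_of (t : seq G) : sigma (seq_of t) = (\sum_(x <- t) x)%R.
Proof.
elim: t => [|x t IH].
  by rewrite big_nil /sigma big1 // => g _; rewrite ffunE.
rewrite -cat1s seq_of_cat sigma_mul IH big_cons; congr (_ + _)%R.
rewrite /sigma (bigD1 x) //= big1 ?addr0; first by rewrite ffunE /= eqxx.
by move=> g /negPf gx; rewrite ffunE /= eq_sym gx.
Qed.

Lemma len_seq_of (t : seq G) : fseq_len (seq_of t) = size t.
Proof.
elim: t => [|x t IH].
  by rewrite /fseq_len big1 // => g _; rewrite ffunE.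
rewrite -cat1s seq_of_cat len_mul IH /fseq_len (bigD1 x) //= big1 ?addn0.
  by rewrite ffunE /= eqxx.
by move=> g /negPf gx; rewrite ffunE /= eq_sym gx.
Qed.

Lemma fseq_prod_map_seq_of (F : seq (seq G)) :
  fseq_prod (map seq_of F) = seq_of (flatten F).
Proof.
elim: F => [|t F IH]; last by rewrite /= fseq_prod_cons IH seq_of_cat.
by rewrite fseq_prod_nil; apply/ffunP => g; rewrite !ffunE.
Qed.

Lemma zero_sum_prod s : (forall A, A \in s -> zero_sum A) -> zero_sum (fseq_prod s).
Proof.
elim: s => [|A s IH] zs; first by rewrite fseq_prod_nil /zero_sum sigma_one.
rewrite fseq_prod_cons /zero_sum sigma_mul (eqP (zs A (mem_head _ _))) add0r.
by apply: IH => B Bs; apply: zs; rewrite in_cons Bs orbT.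
Qed.

Lemma fseq_prod_ge s A g : A \in s -> A g <= fseq_prod s g.
Proof.
elim: s => [|B s IH] //; rewrite in_cons fseq_prod_cons fseq_mulE => /orP [/eqP ->|As].
  exact: leq_addr.
exact: leq_trans (IH As) (leq_addl _ _).
Qed.

Lemma fseq_prod_eq0 s g : (forall A, A \in s -> A g = 0) -> fseq_prod s g = 0.
Proof.
elim: s => [|B s IH] s0; first by rewrite fseq_prod_nil ffunE.
rewrite fseq_prod_cons fseq_mulE (s0 B (mem_head _ _)) IH // => A As.
by apply: s0; rewrite in_cons As orbT.
Qed.

Definition fseq_div A U : fseq G := [ffun g => A g - U g].

Lemma fseq_divK A U : (forall g, U g <= A g) -> A = fseq_mul U (fseq_div A U).
Proof. by move=> UA; apply/ffunP => g; rewrite !ffunE subnKC. Qed.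

Lemma atom_divisor A U :
  atom A -> (forall g, U g <= A g) -> zero_sum U -> U = fseq_one G \/ U = A.
Proof.
case=> zA _ minA UA zU; have AUV := fseq_divK UA.
have zV : zero_sum (fseq_div A U).
  by move: zA; rewrite /zero_sum {1}AUV sigma_mul (eqP zU) add0r.
case: (minA _ _ zU zV AUV) => [->|V1]; [by left | by right; rewrite AUV V1 fseq_mulf1].
Qed.

Lemma divisor_len_eq A U : (forall g, U g <= A g) -> fseq_len U = fseq_len A -> U = A.
Proof.
move=> UA lenUA; have AUV := fseq_divK UA.
have : fseq_len (fseq_div A U) = 0 by move: lenUA; rewrite [in RHS]AUV len_mul; lia.
by move/len0_one => V1; rewrite AUV V1 fseq_mulf1.
Qed.

Lemma len1_seq_of U : fseq_len U = 1 -> exists h, U = seq_of [:: h].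
Proof.
move=> U1; have [h Uh] : exists h, 0 < U h.
  apply/existsP; apply: contraT; rewrite negb_exists => /forallP U0.
  by move: U1; rewrite /fseq_len big1 // => g _; move: (U0 g); rewrite lt0n negbK => /eqP.
exists h; symmetry; apply: divisor_len_eq; last by rewrite len_seq_of U1.
by move=> g; rewrite ffunE /=; case: eqP => // <-; rewrite addn0.
Qed.

Lemma atom_len_gt0 A : atom A -> 0 < fseq_len A.
Proof. by case=> _ nA _; rewrite lt0n; apply: contra nA => /eqP /len0_one ->. Qed.

Lemma atom_cases A : atom A -> A = zero_atom \/ (A 0%R = 0 /\ 2 <= fseq_len A).
Proof.
move=> aA; case: (posnP (A 0%R)) => [A0|A0].
  right; split => //; have := atom_len_gt0 aA; rewrite leq_eqVlt => /orP [/eqP A1|//].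
  have [h Ah] := len1_seq_of (esym A1).
  case: aA => + _ _; rewrite Ah /zero_sum sigma_seq_of big_seq1 => /eqP h0.
  by move: A0; rewrite Ah ffunE h0 /= eqxx.
have zU : zero_sum zero_atom by rewrite /zero_sum sigma_seq_of big_seq1.
have UA : forall g, zero_atom g <= A g by move=> g; rewrite ffunE /=; case: eqP => // <-.
case: (atom_divisor aA UA zU) => [U1|]; last by left.
by have := congr1 (fun f : fseq G => f 0%R) U1; rewrite !ffunE /= eqxx.
Qed.

Lemma atom_power A g k : atom A -> 0 < k -> k <= A g -> (g *+ k = 0)%R ->
  A = seq_of (nseq k g).
Proof.
move=> aA k0 kA gk.
have UA : forall h, seq_of (nseq k g) h <= A h.
  by move=> h; rewrite ffunE count_nseq /=; case: eqP => [<-|_]; rewrite ?mul1n ?mul0n.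
have zU : zero_sum (seq_of (nseq k g)) by rewrite /zero_sum sigma_seq_of big_nseq iter_addr_0 gk.
case: (atom_divisor aA UA zU) => [U1|//].
have := congr1 (fun f : fseq G => f g) U1; rewrite !ffunE count_nseq /= eqxx mul1n.
by move=> k_0; move: k0; rewrite k_0.
Qed.

Lemma divisor_seq_of_mask (t : seq G) U : (forall g, U g <= count_mem g t) ->
  exists2 m, size m = size t & U = seq_of (mask m t).
Proof.
elim: t U => [|x t IH] U Ut.
  exists [::] => //; apply/ffunP => g; rewrite ffunE; apply/eqP.
  by rewrite -leqn0 Ut.
case: (posnP (U x)) => [Ux|Ux].
  have Ut' : forall g, U g <= count_mem g t.
    by move=> g; have := Ut g; rewrite /=; case: eqP => [<-|_]; rewrite ?Ux.
  by have [m sm ->] := IH U Ut'; exists (false :: m); rewrite /= ?sm.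
pose U' : fseq G := [ffun g => U g - (x == g)].
have Ut' : forall g, U' g <= count_mem g t.
  by move=> g; rewrite ffunE leq_subLR; exact: Ut g.
have [m sm eU'] := IH U' Ut'; exists (true :: m); first by rewrite /= sm.
apply/ffunP => g; rewrite /= ffunE /=.
have := congr1 (fun f : fseq G => f g) eU'; rewrite !ffunE /= => <-.
by case: eqP => [<-|_]; rewrite ?subn1 ?subn0 // add1n prednK.
Qed.

Lemma seq_of_atom (t : seq G) :
  t != [::] -> (\sum_(x <- t) x = 0)%R ->
  (forall m, size m = size t -> 0 < count id m < size t ->
     (\sum_(x <- mask m t) x != 0)%R) ->
  atom (seq_of t).
Proof.
move=> tn t0 tmin; split.
- by rewrite /zero_sum sigma_seq_of t0.
- apply/eqP => t1; move: (congr1 (@fseq_len G) t1); rewrite len_seq_of len_one.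
  by move/eqP; rewrite size_eq0 (negPf tn).
move=> U V zU zV tUV.
have Ut : forall g, U g <= count_mem g t.
  by move=> g; have := congr1 (fun f : fseq G => f g) tUV; rewrite !ffunE => ->; apply: leq_addr.
have [m sm eU] := divisor_seq_of_mask Ut.
case: (posnP (count id m)) => [m0|mpos].
  left; rewrite eU; suff -> : mask m t = [::] by apply/ffunP => g; rewrite !ffunE.
  by apply/eqP; rewrite -size_eq0 size_mask ?sm // m0.
case: (ltnP (count id m) (size t)) => [mlt|mge].
  have := tmin m sm; rewrite mpos mlt => /(_ isT).
  by move: zU; rewrite /zero_sum eU sigma_seq_of => ->.
right; apply: len0_one.
have lenU : fseq_len U = size t.
  rewrite eU len_seq_of size_mask ?sm //; apply/eqP; rewrite eqn_leq mge andbT.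
  by rewrite -sm count_size.
by have := congr1 (@fseq_len G) tUV; rewrite len_seq_of len_mul lenU; lia.
Qed.

Lemma factorization_counts D s :
  (forall A, atom A -> fseq_len A <= D) -> (forall A, A \in s -> atom A) ->
  exists p N, [/\ size s = fseq_prod s 0%R + p,
    fseq_len (fseq_prod s) = fseq_prod s 0%R + N, 2 * p <= N <= D * p,
    (2 * p = N -> forall A, A \in s -> A = zero_atom \/ fseq_len A = 2) &
    (D * p = N -> forall A, A \in s -> A = zero_atom \/ fseq_len A = D)].
Proof.
move=> atomD; elim: s => [|A s IH] atoms_s.
  by exists 0, 0; rewrite fseq_prod_nil len_one ffunE.
have atoms_s' : forall B, B \in s -> atom B.
  by move=> B Bs; apply: atoms_s; rewrite in_cons Bs orbT.
have [p [N [sizes lens bounds low high]]] := IH atoms_s'.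
have aA := atoms_s A (mem_head _ _); have AD := atomD A aA.
rewrite fseq_prod_cons len_mul fseq_mulE.
have in_cons_cases (P : fseq G -> Prop) C :
    P C -> (forall B, B \in s -> P B) -> forall B, B \in C :: s -> P B.
  by move=> PC Ps B; rewrite in_cons => /orP [/eqP ->|/Ps].
case: (atom_cases aA) => [A0|[A0 A2]].
  exists p, N; rewrite A0 len_seq_of ffunE /= eqxx; split => //=.
  - by rewrite sizes.
  - by rewrite lens addnA.
  - by move=> /low; apply: in_cons_cases; left.
  - by move=> /high; apply: in_cons_cases; left.
exists p.+1, (fseq_len A + N); rewrite A0 add0n; move/andP: bounds => [lo hi].
split => /=.
- by rewrite sizes addnS.
- by rewrite lens addnCA.
- by apply/andP; split; lia.
- by move=> eq2; apply: in_cons_cases; [right; lia | apply: low; lia].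
- by move=> eqD; apply: in_cons_cases; [right; lia | apply: high; lia].
Qed.

Lemma size_le_len s : (forall A, A \in s -> atom A) -> size s <= fseq_len (fseq_prod s).
Proof.
elim: s => [|B s IH] atoms_s //; rewrite fseq_prod_cons len_mul /=.
have := atom_len_gt0 (atoms_s B (mem_head _ _)).
have := IH (fun A As => atoms_s A (ltac:(by rewrite in_cons As orbT))).
lia.
Qed.

Lemma atom_lengths A k : atom A -> in_length_set A k -> k = 1.
Proof.
move=> aA [[|A1 s] [<- atoms_s prodA]].
  by case: aA => _ + _; rewrite -prodA fseq_prod_nil eqxx.
have atoms_s' : forall B, B \in s -> atom B.
  by move=> B Bs; apply: atoms_s; rewrite in_cons Bs orbT.
have [zA1 nA1 _] := atoms_s A1 (mem_head _ _).
case: aA => _ _ /(_ A1 (fseq_prod s) zA1).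
case=> [||A1_1|s1]; rewrite -?prodA ?fseq_prod_cons //.
- by apply: zero_sum_prod => B /atoms_s' [].
- by rewrite A1_1 eqxx in nA1.
- by have := size_le_len atoms_s'; rewrite s1 len_one; case: (s).
Qed.

(* If 1 is a length of B then B is an atom, so 1 is its only length. *)
Lemma length_one_unique B k : in_length_set B 1 -> in_length_set B k -> k = 1.
Proof.
move=> [s [s1 atoms_s <-]]; apply: atom_lengths.
case: s s1 atoms_s => [|A [|]] // _ atomsA.
by rewrite fseq_prod_cons fseq_prod_nil fseq_mulf1; apply: atomsA; rewrite mem_head.
Qed.

Lemma length_ratio D B a b : 2 <= D -> (forall A, atom A -> fseq_len A <= D) ->
  in_length_set B a -> in_length_set B b -> 2 * b <= D * a.
Proof.
move=> D2 atomD [sa [<- atoms_a prod_a]] [sb [<- atoms_b prod_b]].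
have [pa [Na [sza lena /andP [_ hia] _ _]]] := factorization_counts atomD atoms_a.
have [pb [Nb [szb lenb /andP [lob _] _ _]]] := factorization_counts atomD atoms_b.
rewrite prod_a in sza lena; rewrite prod_b in szb lenb.
rewrite sza szb; nia.
Qed.

End FreeMonoid.

Lemma system_ext (G : finZmodType) (P Q : nat -> Prop) :
  in_system_of_sets_of_lengths G P -> (forall k, P k <-> Q k) ->
  in_system_of_sets_of_lengths G Q.
Proof. by move=> [B [zB LB]] PQ; exists B; split => // k; rewrite -PQ. Qed.

Section ExponentTwo.
Variable G : finZmodType.
Hypothesis addxx : forall x : G, (x + x = 0)%R.
Implicit Types (A : fseq G) (s : seq (fseq G)).

(* Pigeonhole on subset sums: two distinct subsets of S with equal sums exist
   as soon as 2^|S| > |G|, and in exponent 2 their symmetric difference is a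
   nonempty zero-sum subset of S. *)
Lemma exp2_zero_sum_subset (S : {set G}) : #|G| < 2 ^ #|S| ->
  exists2 Z : {set G}, Z \subset S & Z != set0 /\ (\sum_(y in Z) y = 0)%R.
Proof.
move=> large; pose f (X : {set G}) := (\sum_(y in X) y)%R.
have [X [Y [XS YS XY fXY]]] : exists X Y,
    [/\ X \in powerset S, Y \in powerset S, X != Y & f X = f Y].
  case: (boolP [exists X in powerset S, exists Y in powerset S, (X != Y) && (f X == f Y)]).
    by move=> /existsP [X /andP [XS /existsP [Y /andP [YS /andP [XY /eqP e]]]]]; exists X, Y.
  move=> /existsPn no_coll; exfalso.
  have f_inj : {in powerset S &, injective f}.
    move=> X Y XS YS fXY; apply/eqP; apply: contraT => XY.
    by have := no_coll X; rewrite XS => /existsPn /(_ Y); rewrite YS XY fXY eqxx.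
  have := max_card [set f X | X in powerset S].
  by rewrite (card_in_imset f_inj) card_powerset leqNgt large.
move: XS YS; rewrite !powersetE => XS YS.
exists ((X :\: Y) :|: (Y :\: X)).
  by apply/subsetP => y; rewrite !inE => /orP [] /andP [_ ?];
    [exact: (subsetP XS) | exact: (subsetP YS)].
split.
  apply: contra XY => /eqP D0; apply/eqP/setP => y.
  have : y \notin (X :\: Y) :|: (Y :\: X) by rewrite D0 inE.
  by rewrite !inE; case: (y \in X); case: (y \in Y).
have fX : f X = (\sum_(y in X :&: Y) y + \sum_(y in X :\: Y) y)%R.
  by rewrite /f (big_setID Y).
have fY : f Y = (\sum_(y in X :&: Y) y + \sum_(y in Y :\: X) y)%R.
  by rewrite /f (big_setID X) setIC.
have fD : f ((X :\: Y) :|: (Y :\: X)) = (\sum_(y in X :\: Y) y + \sum_(y in Y :\: X) y)%R.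
  rewrite /f (big_setID X); congr (_ + _)%R; apply: eq_bigl => y; rewrite !inE;
  by case: (y \in X); case: (y \in Y).
have : (f X + f Y)%R = f ((X :\: Y) :|: (Y :\: X)) by rewrite fD fX fY addrACA addxx add0r.
by rewrite fXY addxx.
Qed.

Lemma exp2_atom_square A g : atom A -> 2 <= A g -> A = seq_of [:: g; g].
Proof.
move=> aA Ag.
have UA : forall h, seq_of [:: g; g] h <= A h.
  by move=> h; rewrite ffunE /=; case: eqP => [<-|_]; rewrite ?addn0.
have zU : zero_sum (seq_of [:: g; g]).
  by rewrite /zero_sum sigma_seq_of !big_cons big_nil addr0 addxx.
case: (atom_divisor aA UA zU) => [U1|//].
by have := congr1 (fun f : fseq G => f g) U1; rewrite !ffunE /= eqxx.
Qed.

Lemma seq_of_enumE (Z : {set G}) g : seq_of (enum Z) g = (g \in Z).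
Proof. by rewrite ffunE /= count_uniq_mem ?enum_uniq // mem_enum. Qed.

Lemma squarefree_seq_of_enum A : (forall g, A g <= 1) ->
  A = seq_of (enum [set g | A g != 0]).
Proof.
move=> A1; apply/ffunP => g; rewrite seq_of_enumE inE.
by have := A1 g; case: (A g) => [|[|]].
Qed.

Lemma exp2_atom_len n A : 2 <= n -> #|G| < 2 ^ n -> atom A -> fseq_len A <= n.
Proof.
move=> n2 Gn aA.
case: (boolP [exists g, 2 <= A g]) => [/existsP [g Ag]|].
  by rewrite (exp2_atom_square aA Ag) len_seq_of.
rewrite negb_exists => /forallP A1; set S := [set g | A g != 0].
have {A1} eA : A = seq_of (enum S).
  by apply: squarefree_seq_of_enum => g; have := A1 g; rewrite -ltnNge ltnS.
rewrite eA len_seq_of -cardE leqNgt; apply/negP => Sn.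
have [x xS] : exists x, x \in S by apply/set0Pn; rewrite -card_gt0; lia.
have large : #|G| < 2 ^ #|S :\ x|.
  apply: leq_trans Gn _; rewrite leq_exp2l //.
  by move: Sn; rewrite (cardsD1 x S) xS; lia.
have [Z ZS [Zn zZ]] := exp2_zero_sum_subset large.
have UA : forall g, seq_of (enum Z) g <= A g.
  move=> g; rewrite eA !seq_of_enumE.
  by case gZ: (g \in Z) => //; have := subsetP ZS g gZ; rewrite !inE => /andP [_ ->].
have zU : zero_sum (seq_of (enum Z)) by rewrite /zero_sum sigma_seq_of big_enum zZ.
case: (atom_divisor aA UA zU) => [U1|UA'].
  have [z zZ'] := set0Pn _ Zn.
  by have := congr1 (fun f : fseq G => f z) U1; rewrite seq_of_enumE ffunE zZ'.
have := congr1 (fun f : fseq G => f x) UA'; rewrite eA !seq_of_enumE xS.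
have : x \notin Z by apply: contraL xS => /(subsetP ZS); rewrite !inE eqxx.
by move/negPf ->.
Qed.

(* In exponent 2, atoms of length 2 are squares, so all multiplicities are even. *)
Lemma exp2_len2_atom_even A g : atom A -> fseq_len A = 2 -> ~~ odd (A g).
Proof.
move=> aA A2; apply/negP => oddAg.
have UA : forall h, seq_of [:: g] h <= A h.
  by move=> h; rewrite ffunE /=; case: eqP => [<-|]; rewrite ?addn0 // lt0n; case: (A g) oddAg.
have AgV := fseq_divK UA.
have : fseq_len (fseq_div A (seq_of [:: g])) = 1.
  by move: A2; rewrite {1}AgV len_mul len_seq_of /=; lia.
move/len1_seq_of => [h eV]; rewrite eV -seq_of_cat /= in AgV.
case: aA => + _ _; rewrite AgV /zero_sum sigma_seq_of !big_cons big_nil addr0 => /eqP gh.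
have hg : h = g by rewrite -[h]add0r -(addxx g) -addrA gh addr0.
by move: oddAg; rewrite AgV ffunE /= hg eqxx.
Qed.

Lemma exp2_prod_even s g : g != 0%R ->
  (forall A, A \in s -> A = zero_atom G \/ (atom A /\ fseq_len A = 2)) ->
  ~~ odd (fseq_prod s g).
Proof.
move=> gn; elim: s => [|A s IH] sA; first by rewrite fseq_prod_nil ffunE.
rewrite fseq_prod_cons fseq_mulE oddD.
have -> : odd (A g) = false.
  case: (sA A (mem_head _ _)) => [->|[aA A2]].
    by rewrite ffunE /= eq_sym (negPf gn).
  exact/negbTE/exp2_len2_atom_even.
by rewrite IH // => B Bs; apply: sA; rewrite in_cons Bs orbT.
Qed.

End ExponentTwo.

Notation C25 := 'rV['Z_2]_5.

Lemma addxx_C25 (x : C25) : (x + x = 0)%R.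
Proof.
apply/rowP => i; rewrite !mxE; apply/val_inj.
by case: (x ord0 i) => [[|[|n]]].
Qed.

Lemma atom_len_C25 (A : fseq C25) : atom A -> fseq_len A <= 6.
Proof. by apply: (exp2_atom_len addxx_C25); rewrite // card_mx card_ord. Qed.

(* Elements of C_2^5 are coded by the naturals below 32 through their binary
   digits; addition becomes bitwise exclusive or, which allows the explicit
   factorizations below to be checked by computation. *)
Definition bit (i c : nat) : bool := odd (c %/ 2 ^ i).

Fixpoint xorn (k a b : nat) : nat :=
  if k is k'.+1 then (odd a (+) odd b) + 2 * xorn k' a./2 b./2 else 0.

Definition xor5 : nat -> nat -> nat := xorn 5.

Definition code (c : nat) : C25 := \row_(i < 5) ((bit i c)%:R)%R.

Lemma xor5_bits : all (fun a => all (fun b => (xor5 a b < 32) &&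
   all (fun i => bit i (xor5 a b) == bit i a (+) bit i b) (iota 0 5)) (iota 0 32)) (iota 0 32).
Proof. by vm_compute. Qed.

Lemma bits_inj : all (fun a => all (fun b =>
   all (fun i => bit i a == bit i b) (iota 0 5) ==> (a == b)) (iota 0 32)) (iota 0 32).
Proof. by vm_compute. Qed.

Lemma xor5_lt32 a b : a < 32 -> b < 32 -> xor5 a b < 32.
Proof.
move=> a32 b32; move/allP: xor5_bits => /(_ a); rewrite mem_iota a32 => /(_ isT).
by move/allP => /(_ b); rewrite mem_iota b32 => /(_ isT) /andP [].
Qed.

Lemma code_xor5 a b : a < 32 -> b < 32 -> code (xor5 a b) = (code a + code b)%R.
Proof.
move=> a32 b32; apply/rowP => i; rewrite !mxE.
move/allP: xor5_bits => /(_ a); rewrite mem_iota a32 => /(_ isT).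
move/allP => /(_ b); rewrite mem_iota b32 => /(_ isT) /andP [_ /allP /(_ i)].
rewrite mem_iota ltn_ord => /(_ isT) /eqP ->.
by case: (bit i a); case: (bit i b); apply/val_inj.
Qed.

Lemma code_inj a b : a < 32 -> b < 32 -> code a = code b -> a = b.
Proof.
move=> a32 b32 eab.
move/allP: bits_inj => /(_ a); rewrite mem_iota a32 => /(_ isT).
move/allP => /(_ b); rewrite mem_iota b32 => /(_ isT) /implyP ab; apply/eqP; apply: ab.
apply/allP => i; rewrite mem_iota /= => i5.
have := congr1 (fun r : C25 => r ord0 (Ordinal i5)) eab; rewrite !mxE /=.
by case: (bit i a); case: (bit i b) => // /(congr1 val).
Qed.

Lemma code0 : code 0 = 0%R.
Proof. by apply/rowP => i; rewrite !mxE /bit div0n. Qed.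

Lemma code_neq0 c : 0 < c < 32 -> code c != 0%R.
Proof.
move=> /andP [c0 c32]; apply/eqP; rewrite -code0 => /code_inj.
by move=> /(_ c32 isT) c_0; move: c0; rewrite c_0.
Qed.

Lemma sum_code (t : seq nat) : all (fun c => c < 32) t ->
  (\sum_(x <- map code t) x)%R = code (foldr xor5 0 t) /\ foldr xor5 0 t < 32.
Proof.
elim: t => [|c t IH] /=; first by rewrite big_nil code0.
move=> /andP [c32 t32]; have [sum_t xt32] := IH t32.
by rewrite big_cons sum_t code_xor5 // xor5_lt32.
Qed.

Lemma count_code (t : seq nat) c : all (fun c => c < 32) t -> c < 32 ->
  count_mem (code c) (map code t) = count_mem c t.
Proof.
move=> t32 c32; rewrite count_map; apply: eq_in_count => x xt /=.
by apply/eqP/eqP => [|->] //; apply: code_inj => //; exact: (allP t32).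
Qed.

Fixpoint masks (n : nat) : seq (seq bool) :=
  if n is n'.+1 then [seq true :: m | m <- masks n'] ++ [seq false :: m | m <- masks n']
  else [:: [::]].

Lemma mem_masks m : m \in masks (size m).
Proof.
elim: m => [|b m IH] //=; rewrite mem_cat.
by case: b; apply/orP; [left|right]; apply/mapP; exists m.
Qed.

Definition code_atom (cs : seq nat) : bool :=
  [&& cs != [::], all (fun c => c < 32) cs, foldr xor5 0 cs == 0 &
     all (fun m => (0 < count id m < size cs) ==> (foldr xor5 0 (mask m cs) != 0))
       (masks (size cs))].

Definition code_seq (cs : seq nat) : fseq C25 := seq_of (map code cs).

Lemma code_atomP cs : code_atom cs -> atom (code_seq cs).
Proof.
case/and4P => cs_n cs32 cs0 cs_min; apply: seq_of_atom.
- by case: cs cs_n {cs32 cs0 cs_min}.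
- by have [-> _] := sum_code cs32; rewrite (eqP cs0) code0.
move=> m; rewrite size_map => sm m_proper; rewrite -map_mask.
have m32 : all (fun c => c < 32) (mask m cs) by apply/allP => c /mem_mask /(allP cs32).
have [-> xm32] := sum_code m32; apply: code_neq0; rewrite xm32 andbT lt0n.
by have := allP cs_min m; rewrite -sm mem_masks => /(_ isT); rewrite sm m_proper.
Qed.

Definition code_factorization (T : seq nat) (p : nat) : Prop :=
  exists F : seq (seq nat), [&& size F == p, all code_atom F & perm_eq (flatten F) T].

Lemma code_factorizationP T p : code_factorization T p -> in_length_set (code_seq T) p.
Proof.
move=> [F /and3P [/eqP sF atomsF permF]].
exists (map code_seq F); split.
- by rewrite size_map.
- by move=> A /mapP [cs csF ->]; apply: code_atomP; apply: (allP atomsF).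
rewrite /code_seq (map_comp (@seq_of C25) (map code)) fseq_prod_map_seq_of.
by apply: seq_of_perm; rewrite -map_flatten; apply: perm_map.
Qed.

Lemma code_factorization_cat T1 T2 p1 p2 : code_factorization T1 p1 ->
  code_factorization T2 p2 -> code_factorization (T1 ++ T2) (p1 + p2).
Proof.
move=> [F1 /and3P [/eqP s1 a1 q1]] [F2 /and3P [/eqP s2 a2 q2]]; exists (F1 ++ F2).
by rewrite size_cat s1 s2 eqxx all_cat a1 a2 flatten_cat perm_cat.
Qed.

Lemma code_factorization_zeros v : code_factorization (nseq v 0) v.
Proof.
exists (nseq v [:: 0]); rewrite size_nseq eqxx /=.
apply/andP; split; first by apply/allP => x /nseqP [-> _].
by elim: v => //= v IH; rewrite perm_cons.
Qed.

(* Lengths of 0^v T, for a list T of nonzero codes: a factorization consists of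
   the v atoms 0 and p further atoms with 2p <= |T| <= 6p, and the extreme case
   2p = |T| only uses squares, hence forces all multiplicities in T to be even. *)
Lemma code_lengths v T k : all (fun c => 0 < c < 32) T ->
  in_length_set (code_seq (nseq v 0 ++ T)) k ->
  exists2 p, k = v + p &
    [/\ size T <= 6 * p, 2 * p <= size T & 2 * p = size T -> forall c, ~~ odd (count_mem c T)].
Proof.
move=> T32 [s [<- atoms_s prod_s]].
have vT32 : all (fun c => c < 32) (nseq v 0 ++ T).
  by rewrite all_cat; apply/andP; split; apply/allP => x;
    [move/nseqP => [-> _] | move/(allP T32) => /andP []].
have [p [N [sizes lens /andP [lo hi] low _]]] := factorization_counts atom_len_C25 atoms_s.
have B0 : code_seq (nseq v 0 ++ T) 0%R = v.
  rewrite ffunE -code0 count_code // count_cat count_nseq /= mul1n.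
  rewrite (@eq_in_count _ _ pred0) ?count_pred0 ?addn0 //.
  by move=> x /(allP T32) /andP [x0 _] /=; case: x x0.
rewrite prod_s B0 in sizes lens.
rewrite /code_seq len_seq_of size_map size_cat size_nseq in lens.
exists p => //; split; try lia.
move=> pT c; case: (boolP (c \in T)) => [cT|]; last by move/count_memPn ->.
have /andP [c0 c32] := allP T32 c cT.
have {low} /low squares : 2 * p = N by lia.
have sq : forall A, A \in s -> A = zero_atom C25 \/ (atom A /\ fseq_len A = 2).
  by move=> A As; case: (squares A As) => [->|A2]; [left | right; split => //; exact: atoms_s].
have := exp2_prod_even addxx_C25 (code_neq0 (introT andP (conj c0 c32))) sq.
rewrite prod_s ffunE count_code // count_cat count_nseq /=.
by rewrite eq_sym (negbTE (lt0n_neq0 c0)) mul0n add0n.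
Qed.

Lemma realize_interval T v lo hi c : all (fun c => 0 < c < 32) T -> lo <= hi ->
  (forall p, size T <= 6 * p -> lo <= p) -> (forall p, 2 * p < size T -> p <= hi) ->
  odd (count_mem c T) -> (forall p, lo <= p <= hi -> code_factorization T p) ->
  in_system_of_sets_of_lengths C25 (fun k => v + lo <= k <= v + hi).
Proof.
move=> T32 lohi lo_min hi_max odd_c facts.
have len_in : forall k, v + lo <= k <= v + hi -> in_length_set (code_seq (nseq v 0 ++ T)) k.
  move=> k k_in; apply: code_factorizationP; rewrite (_ : k = v + (k - v)); last by lia.
  by apply: code_factorization_cat; [exact: code_factorization_zeros | apply: facts; lia].
exists (code_seq (nseq v 0 ++ T)); split.
  have [|s [_ atoms_s <-]] := len_in (v + lo); first by rewrite leqnn leq_add2l.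
  by apply: zero_sum_prod => A /atoms_s [].
move=> k; split; first exact: len_in.
move/(code_lengths T32) => [p -> [p_lo p_hi p_even]].
have := lo_min p p_lo; case: (ltnP (2 * p) (size T)) => [/hi_max|pT]; first by lia.
by have := p_even ltac:(lia) c; rewrite odd_c.
Qed.

Lemma singleton_C25 v : in_system_of_sets_of_lengths C25 (fun k => v <= k <= v).
Proof.
exists (code_seq (nseq v 0 ++ [::])); split.
  by rewrite /zero_sum /code_seq sigma_seq_of cats0 map_nseq code0 big_nseq iter_addr_0 mul0rn.
move=> k; split => [vk|].
  rewrite (_ : k = v + 0); last by lia.
  apply/code_factorizationP/code_factorization_cat; first exact: code_factorization_zeros.
  by exists [::].
by move/(code_lengths (isT : all _ [::])) => [p -> [_ /= p0 _]]; lia.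
Qed.

(* The atom U = e1 e2 e3 e4 e5 (e1 + ... + e5) and the powers U^(2j): the
   sequence U^2 factors as U.U or as the six squares of its terms, so U^(2j)
   has the factorization lengths 2j + 4t for t <= j. *)
Definition basis_atom : seq nat := [:: 1; 2; 4; 8; 16; 31].

Fixpoint basis_power (j : nat) : seq nat :=
  if j is j'.+1 then basis_atom ++ basis_atom ++ basis_power j' else [::].

Lemma basis_powerS j : basis_power j.+1 = basis_atom ++ basis_atom ++ basis_power j.
Proof. by []. Qed.

Lemma basis_power_lengths j t : t <= j -> code_factorization (basis_power j) (2 * j + 4 * t).
Proof.
have UU2 : code_factorization (basis_atom ++ basis_atom) 2.
  by exists [:: basis_atom; basis_atom]; vm_compute.
have UU6 : code_factorization (basis_atom ++ basis_atom) 6.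
  by exists [seq [:: c; c] | c <- basis_atom]; vm_compute.
elim: j t => [|j IH] t tj; first by rewrite (_ : t = 0) //; [exists [::] | lia].
rewrite basis_powerS catA.
case: (ltnP t j.+1) => tj'.
  rewrite (_ : 2 * j.+1 + 4 * t = 2 + (2 * j + 4 * t)); last by lia.
  by apply: code_factorization_cat UU2 (IH _ _); lia.
rewrite (_ : 2 * j.+1 + 4 * t = 6 + (2 * j + 4 * j)); last by lia.
by apply: code_factorization_cat UU6 (IH _ _).
Qed.

Lemma size_basis_power j : size (basis_power j) = 12 * j.
Proof. by elim: j => // j IH; rewrite basis_powerS !size_cat IH /=; lia. Qed.

Lemma basis_power_even j c : ~~ odd (count_mem c (basis_power j)).
Proof.
by elim: j => // j IH; rewrite basis_powerS !count_cat addnA addnn oddD odd_double.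
Qed.

Lemma basis_power_codes j : all (fun c => 0 < c < 32) (basis_power j).
Proof. by elim: j => // j IH; rewrite basis_powerS !all_cat IH. Qed.

(* A block: a list X of nonzero codes with an odd multiplicity c, together with
   code factorizations Fs of X of the consecutive lengths l0, ..., l0 + w, and
   such that l0 and l0 + w are the extreme lengths allowed by code_lengths. *)
Definition block (X : seq nat) (l0 w : nat) (Fs : seq (seq (seq nat))) (c : nat) : bool :=
  [&& map size Fs == iota l0 w.+1,
      all (fun F => all code_atom F && perm_eq (flatten F) X) Fs,
      all (fun c => 0 < c < 32) X, odd (count_mem c X),
      6 * l0 < size X + 6 & size X <= 2 * (l0 + w) + 2].

Lemma block_lengths X l0 w Fs c l : block X l0 w Fs c -> l <= w ->
  code_factorization X (l0 + l).
Proof.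
case/and3P => /eqP sizes /allP facts _ lw; exists (nth [::] Fs l).
have lFs : l < size Fs by rewrite -(size_map size) sizes size_iota.
have /andP [-> ->] := facts _ (mem_nth [::] lFs).
by rewrite -(nth_map _ 0) // sizes nth_iota ?eqxx.
Qed.

(* U^(2j) X has the factorization lengths [2j + l0, 6j + l0 + w] once the gaps
   of size 4 between the lengths of U^(2j) are filled, i.e. j = 0 or w >= 3. *)
Lemma basis_power_block_lengths j X l0 w Fs c : block X l0 w Fs c -> (j = 0 \/ 3 <= w) ->
  forall p, 2 * j + l0 <= p <= 6 * j + l0 + w -> code_factorization (basis_power j ++ X) p.
Proof.
move=> blockX jw p /andP [p_lo p_hi].
have [t [tj t_lo t_hi]] : exists t, [/\ t <= j, 4 * t <= p - 2 * j - l0 &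
    p - 2 * j - l0 - 4 * t <= w].
  case: (leqP j ((p - 2 * j - l0) %/ 4)) => q; first by exists j; split; lia.
  by exists ((p - 2 * j - l0) %/ 4); split; lia.
rewrite (_ : p = (2 * j + 4 * t) + (l0 + (p - 2 * j - l0 - 4 * t))); last by lia.
exact: code_factorization_cat (basis_power_lengths tj) (block_lengths blockX t_hi).
Qed.

Lemma block_intervals j X l0 w Fs c : block X l0 w Fs c -> (j = 0 \/ 3 <= w) ->
  forall a, 2 * j + l0 <= a ->
  in_system_of_sets_of_lengths C25 (fun k => a <= k <= a + 4 * j + w).
Proof.
move=> blockX jw a a_lo; have := blockX; case/and5P => _ _ X32 odd_c /andP [X_lo X_hi].
apply: (system_ext (@realize_interval _ (a - (2 * j + l0)) (2 * j + l0) (6 * j + l0 + w) c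
  _ _ _ _ _ (basis_power_block_lengths blockX jw))).
- by rewrite all_cat basis_power_codes X32.
- by lia.
- by move=> p; rewrite size_cat size_basis_power; lia.
- by move=> p; rewrite size_cat size_basis_power; lia.
- by rewrite count_cat oddD odd_c; case: (odd _) (basis_power_even j c).
- by move=> k; lia.
Qed.

(* The six blocks, named after their sizes; block_Xn records l0, w and the odd
   code c of Xn.  Together they cover all residues of b - a modulo 4. *)
Definition X8 : seq nat := [:: 1; 2; 4; 4; 6; 7; 12; 14].
Definition X8_factorizations : seq (seq (seq nat)) := [::
  [:: [:: 1; 2; 4; 7]; [:: 4; 6; 12; 14]];
  [:: [:: 1; 6; 7]; [:: 2; 12; 14]; [:: 4; 4]]].
Lemma block_X8 : block X8 2 1 X8_factorizations 1.
Proof. by vm_compute. Qed.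

Definition X10 : seq nat := [:: 1; 1; 3; 4; 7; 7; 9; 12; 12; 14].
Definition X10_factorizations : seq (seq (seq nat)) := [::
  [:: [:: 1; 3; 7; 9; 12]; [:: 1; 4; 7; 12; 14]];
  [:: [:: 1; 3; 12; 14]; [:: 1; 4; 9; 12]; [:: 7; 7]];
  [:: [:: 1; 1]; [:: 3; 4; 7]; [:: 7; 9; 14]; [:: 12; 12]]].
Lemma block_X10 : block X10 2 2 X10_factorizations 3.
Proof. by vm_compute. Qed.

Definition X12 : seq nat := [:: 2; 3; 4; 5; 5; 7; 12; 14; 16; 16; 31; 31].
Definition X12_factorizations : seq (seq (seq nat)) := [::
  [:: [:: 2; 4; 5; 12; 16; 31]; [:: 3; 5; 7; 14; 16; 31]];
  [:: [:: 2; 5; 7]; [:: 3; 12; 16; 31]; [:: 4; 5; 14; 16; 31]];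
  [:: [:: 2; 5; 7]; [:: 3; 4; 5; 12; 14]; [:: 16; 16]; [:: 31; 31]];
  [:: [:: 2; 12; 14]; [:: 3; 4; 7]; [:: 5; 5]; [:: 16; 16]; [:: 31; 31]]].
Lemma block_X12 : block X12 2 3 X12_factorizations 2.
Proof. by vm_compute. Qed.

Definition X16 : seq nat := [:: 4; 4; 5; 5; 6; 6; 7; 8; 9; 14; 16; 16; 16; 24; 31; 31].
Definition X16_factorizations : seq (seq (seq nat)) := [::
  [:: [:: 4; 5; 9; 16; 24]; [:: 4; 5; 6; 8; 16; 31]; [:: 6; 7; 14; 16; 31]];
  [:: [:: 4; 5; 6; 7]; [:: 4; 5; 6; 24; 31]; [:: 8; 9; 14; 16; 31]; [:: 16; 16]];
  [:: [:: 4; 4]; [:: 5; 5]; [:: 6; 9; 16; 31]; [:: 6; 14; 16; 24]; [:: 7; 8; 16; 31]];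
  [:: [:: 4; 4]; [:: 5; 5]; [:: 6; 6]; [:: 7; 24; 31]; [:: 8; 9; 14; 16; 31]; [:: 16; 16]];
  [:: [:: 4; 4]; [:: 5; 5]; [:: 6; 6]; [:: 7; 9; 14]; [:: 8; 16; 24]; [:: 16; 16]; [:: 31; 31]]].
Lemma block_X16 : block X16 3 4 X16_factorizations 7.
Proof. by vm_compute. Qed.

Definition X18 : seq nat := [:: 1; 1; 2; 2; 2; 4; 4; 7; 8; 8; 9; 12; 16; 16; 24; 24; 31; 31].
Definition X18_factorizations : seq (seq (seq nat)) := [::
  [:: [:: 1; 2; 4; 8; 16; 31]; [:: 1; 2; 7; 12; 16; 24]; [:: 2; 4; 8; 9; 24; 31]];
  [:: [:: 1; 2; 4; 7]; [:: 1; 2; 4; 24; 31]; [:: 2; 8; 9; 12; 16; 31]; [:: 8; 16; 24]];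
  [:: [:: 1; 1]; [:: 2; 2]; [:: 2; 4; 8; 9; 24; 31]; [:: 4; 12; 16; 24]; [:: 7; 8; 16; 31]];
  [:: [:: 1; 1]; [:: 2; 2]; [:: 2; 4; 7; 8; 9]; [:: 4; 12; 16; 24]; [:: 8; 16; 24]; [:: 31; 31]];
  [:: [:: 1; 1]; [:: 2; 2]; [:: 2; 7; 9; 12]; [:: 4; 4]; [:: 8; 16; 24]; [:: 8; 16; 24]; [:: 31; 31]];
  [:: [:: 1; 1]; [:: 2; 2]; [:: 2; 7; 9; 12]; [:: 4; 4]; [:: 8; 8]; [:: 16; 16]; [:: 24; 24]; [:: 31; 31]]].
Lemma block_X18 : block X18 3 5 X18_factorizations 2.
Proof. by vm_compute. Qed.

Definition X22 : seq nat := [:: 1; 2; 4; 4; 5; 5; 5; 6; 6; 7; 8; 9; 14; 14; 14; 14; 16; 16; 24; 24; 31; 31].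
Definition X22_factorizations : seq (seq (seq nat)) := [::
  [:: [:: 1; 6; 9; 14]; [:: 2; 5; 6; 14; 16; 31]; [:: 4; 5; 7; 14; 16; 24]; [:: 4; 5; 8; 14; 24; 31]];
  [:: [:: 1; 4; 5]; [:: 2; 5; 9; 14]; [:: 4; 5; 8; 14; 24; 31]; [:: 6; 14; 16; 24]; [:: 6; 7; 14; 16; 31]];
  [:: [:: 1; 4; 5]; [:: 2; 5; 7]; [:: 4; 5; 6; 24; 31]; [:: 6; 14; 16; 24]; [:: 8; 9; 14; 16; 31]; [:: 14; 14]];
  [:: [:: 1; 4; 5]; [:: 2; 4; 6]; [:: 5; 5]; [:: 6; 14; 16; 24]; [:: 7; 24; 31]; [:: 8; 9; 14; 16; 31]; [:: 14; 14]];
  [:: [:: 1; 4; 5]; [:: 2; 4; 6]; [:: 5; 5]; [:: 6; 8; 14]; [:: 7; 24; 31]; [:: 9; 14; 24; 31]; [:: 14; 14]; [:: 16; 16]];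
  [:: [:: 1; 4; 5]; [:: 2; 4; 6]; [:: 5; 5]; [:: 6; 8; 14]; [:: 7; 9; 14]; [:: 14; 14]; [:: 16; 16]; [:: 24; 24]; [:: 31; 31]];
  [:: [:: 1; 8; 9]; [:: 2; 5; 7]; [:: 4; 4]; [:: 5; 5]; [:: 6; 6]; [:: 14; 14]; [:: 14; 14]; [:: 16; 16]; [:: 24; 24]; [:: 31; 31]]].
Lemma block_X22 : block X22 4 6 X22_factorizations 1.
Proof. by vm_compute. Qed.

(* Every interval [a, b] with 2 <= a < b < 3a lies in L(C_2^5): write
   b - a = 4j + w and use the block matching w (mod 4) and the small cases. *)
Lemma intervals_C25 a b : 2 <= a -> a < b -> b < 3 * a ->
  in_system_of_sets_of_lengths C25 (fun k => a <= k <= b).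
Proof.
move=> a2 ab b3a.
have [q [r [r4 eb]]] : exists q r, r < 4 /\ b = a + 4 * q + r.
  exists ((b - a) %/ 4), ((b - a) %% 4); split; first exact: ltn_pmod.
  by have := divn_eq (b - a) 4; lia.
subst b; case: r r4 b3a ab => [|[|[|[|//]]]] _; case: q => [|j] b3a ab.
- by lia.
- by rewrite (_ : _ + _ = a + 4 * j + 4); [apply: (block_intervals block_X16); lia | lia].
- by apply: (block_intervals (j := 0) block_X8); lia.
- by rewrite (_ : _ + _ = a + 4 * j + 5); [apply: (block_intervals block_X18); lia | lia].
- by apply: (block_intervals (j := 0) block_X10); lia.
- by rewrite (_ : _ + _ = a + 4 * j + 6); [apply: (block_intervals block_X22); lia | lia].
- by apply: (block_intervals (j := 0) block_X12); lia.
- by apply: (block_intervals block_X12); lia.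
Qed.

Notation C6 := 'Z_6.

(* A sequence over C_6 is determined by its multiplicity vector
   (A 0, A 1, ..., A 5); atoms over C_6 are classified on these vectors. *)
Definition mults (A : fseq C6) : seq nat := [seq A (inZp i) | i <- iota 0 6].

Definition of_mults (d : seq nat) : fseq C6 := [ffun g : C6 => nth 0 d g].

Lemma size_mults A : size (mults A) = 6.
Proof. by rewrite size_map size_iota. Qed.

Lemma nth_mults_nat A i : i < 6 -> nth 0 (mults A) i = A (inZp i).
Proof. by move=> i6; rewrite (nth_map 0) ?size_iota // nth_iota. Qed.

Lemma nth_mults A (g : C6) : nth 0 (mults A) g = A g.
Proof. by rewrite nth_mults_nat ?valZpK. Qed.

Lemma of_multsK A : of_mults (mults A) = A.
Proof. by apply/ffunP => g; rewrite ffunE nth_mults. Qed.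

Lemma mults_inj : injective mults.
Proof. exact: can_inj of_multsK. Qed.

Lemma mults_one : mults (fseq_one C6) = nseq 6 0.
Proof. by rewrite /mults /= !ffunE. Qed.

Lemma mults_of_mults d : size d = 6 -> mults (of_mults d) = d.
Proof.
move=> d6; apply: (@eq_from_nth _ 0); rewrite size_mults // => i i6.
by rewrite (nth_map 0) ?size_iota // ffunE nth_iota //= modn_small.
Qed.

Lemma sum_C6 (F : C6 -> nat) : \sum_(g : C6) F g = sumn [seq F (inZp i) | i <- iota 0 6].
Proof.
rewrite !big_ord_recl big_ord0 /= !addn0.
by congr (F _ + (F _ + (F _ + (F _ + (F _ + F _))))); apply/val_inj.
Qed.

Lemma len_mults A : fseq_len A = sumn (mults A).
Proof. exact: sum_C6. Qed.

Definition zs6 (d : seq nat) : bool := sumn [seq i * nth 0 d i | i <- iota 0 6] %% 6 == 0.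

Lemma zero_sum_mults A : zero_sum A = zs6 (mults A).
Proof.
rewrite /zero_sum.
have -> : sigma A = ((\sum_(g : C6) g * A g)%N%:R)%R.
  by rewrite natr_sum; apply: eq_bigr => g _; rewrite natrM natr_Zp mulr_natr.
by rewrite /zs6 sum_C6 -val_eqE /= val_Zp_nat.
Qed.

Fixpoint box (bnd : seq nat) : seq (seq nat) :=
  if bnd is n :: bnd' then [seq i :: d | i <- iota 0 n, d <- box bnd'] else [:: [::]].

Lemma mem_box bnd d : (d \in box bnd) =
  (size d == size bnd) && all (fun i => nth 0 d i < nth 0 bnd i) (iota 0 (size bnd)).
Proof.
elim: bnd d => [|n bnd IH] [|x d] //=; first by apply/allpairsP => -[[i e] []].
rewrite eqSS (iotaDl 1 0) all_map /=; apply/allpairsP/idP => [[[i e] /= []]|].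
  rewrite mem_iota /= => xn ebnd [-> ->]; move: ebnd; rewrite IH => /andP [-> all_e].
  by rewrite xn.
by case/and3P => sd xn all_d; exists (x, d); rewrite /= mem_iota IH sd.
Qed.

Definition minimal_zs (d : seq nat) : bool :=
  [&& zs6 d, d != nseq 6 0 &
      all (fun e => [|| e == nseq 6 0, e == d | ~~ zs6 e]) (box (map S d))].

Lemma atom_minimal_zs A : atom A -> minimal_zs (mults A).
Proof.
move=> aA; have [zA nA _] := aA; apply/and3P; split.
- by rewrite -zero_sum_mults.
- by apply: contra nA => /eqP A0; apply/eqP/mults_inj; rewrite A0 mults_one.
apply/allP => e; rewrite mem_box size_map size_mults => /andP [/eqP e6 e_le].
case: (boolP (zs6 e)) => ze; last by rewrite !orbT.
have eA : forall g, of_mults e g <= A g.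
  move=> g; rewrite ffunE -nth_mults -ltnS.
  by have := allP e_le g; rewrite mem_iota add0n ltn_ord (nth_map 0) ?size_mults // => /(_ isT).
have zU : zero_sum (of_mults e) by rewrite zero_sum_mults mults_of_mults.
case: (atom_divisor aA eA zU) => [e1|eA'].
  by rewrite -(mults_of_mults e6) e1 mults_one eqxx.
by rewrite -(mults_of_mults e6) eA' eqxx orbT.
Qed.

Definition orders_C6 : seq nat := [:: 1; 6; 3; 2; 3; 6].

Definition atoms_C6 : seq (seq nat) :=
  [:: [:: 0; 0; 0; 0; 0; 6]; [:: 0; 0; 0; 0; 1; 4]; [:: 0; 0; 0; 0; 2; 2]; [:: 0; 0; 0; 0; 3; 0];
      [:: 0; 0; 0; 1; 0; 3]; [:: 0; 0; 0; 1; 1; 1]; [:: 0; 0; 0; 2; 0; 0]; [:: 0; 0; 1; 0; 0; 2];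
      [:: 0; 0; 1; 0; 1; 0]; [:: 0; 0; 2; 1; 0; 1]; [:: 0; 0; 3; 0; 0; 0]; [:: 0; 1; 0; 0; 0; 1];
      [:: 0; 1; 0; 1; 2; 0]; [:: 0; 1; 1; 1; 0; 0]; [:: 0; 2; 0; 0; 1; 0]; [:: 0; 2; 2; 0; 0; 0];
      [:: 0; 3; 0; 1; 0; 0]; [:: 0; 4; 1; 0; 0; 0]; [:: 0; 6; 0; 0; 0; 0]; [:: 1; 0; 0; 0; 0; 0]].

(* An atom avoiding all powers g^(ord g) has multiplicities below the orders;
   in that box the minimal zero-sum vectors are exactly the listed atoms. *)
Lemma box_atoms_C6 : all (fun d => minimal_zs d ==> (d \in atoms_C6)) (box orders_C6).
Proof. by vm_compute. Qed.

Lemma mults_power i k : i < 6 ->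
  mults (seq_of (nseq k (inZp i : C6))) = [seq (i == j) * k | j <- iota 0 6].
Proof.
move=> i6; apply: (@eq_from_nth _ 0); rewrite size_mults ?size_map ?size_iota // => j j6.
rewrite !(nth_map 0) ?size_iota // ffunE count_nseq nth_iota //=.
by rewrite -val_eqE /= !modn_small.
Qed.

Lemma power_atoms_C6 : all (fun i => let k := nth 0 orders_C6 i in
  [&& 0 < k, ((inZp i : C6) *+ k == 0)%R & [seq (i == j) * k | j <- iota 0 6] \in atoms_C6])
  (iota 0 6).
Proof. by vm_compute. Qed.

Lemma atom_classification_C6 A : atom A -> mults A \in atoms_C6.
Proof.
move=> aA.
case: (boolP (all (fun i => nth 0 (mults A) i < nth 0 orders_C6 i) (iota 0 6))) => [small|].
  apply: (implyP (allP box_atoms_C6 _ _)); first by rewrite mem_box size_mults small.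
  exact: atom_minimal_zs.
case/allPn => i i6; have /and3P [k0 /eqP ord_i atom_i] := allP power_atoms_C6 i i6.
move: i6; rewrite mem_iota /= => i6.
rewrite -leqNgt nth_mults_nat // => big.
by rewrite (atom_power aA k0 big ord_i) mults_power.
Qed.

Definition power1 : seq nat := [:: 0; 6; 0; 0; 0; 0].
Definition power5 : seq nat := [:: 0; 0; 0; 0; 0; 6].
Definition atom15 : seq nat := [:: 0; 1; 0; 0; 0; 1].

Definition supported15 (d : seq nat) : bool := all (fun i => nth 0 d i == 0) [:: 0; 2; 3; 4].

Lemma atoms_C6_facts : all (fun d => [&& sumn d <= 6,
   (sumn d == 6) ==> (d \in [:: power1; power5]) &
   supported15 d ==> (d \in [:: power1; power5; atom15])]) atoms_C6.
Proof. by vm_compute. Qed.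

Lemma atom_len_C6 (A : fseq C6) : atom A -> fseq_len A <= 6.
Proof.
by move/atom_classification_C6 => /(allP atoms_C6_facts) /and3P []; rewrite len_mults.
Qed.

Lemma atom_len6_C6 (A : fseq C6) : atom A -> fseq_len A = 6 -> mults A \in [:: power1; power5].
Proof.
move/atom_classification_C6 => /(allP atoms_C6_facts) /and3P [_ /implyP max6 _].
by rewrite len_mults => A6; apply: max6; rewrite A6.
Qed.

Lemma atom_support15_C6 (A : fseq C6) : atom A -> supported15 (mults A) ->
  mults A \in [:: power1; power5; atom15].
Proof. by move/atom_classification_C6 => /(allP atoms_C6_facts) /and3P [_ _ /implyP]. Qed.

Lemma supported15_mults B : supported15 (mults B) = all (fun i => B (inZp i) == 0) [:: 0; 2; 3; 4].
Proof. by apply: eq_in_all => i; rewrite !inE => /or4P [] /eqP ->; rewrite nth_mults_nat. Qed.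

(* Over {1, 5}, a factorization with t copies of 1^6, u of 5^6 and p of 1.5 has
   length t + u + p; comparing multiplicities, all lengths agree modulo 4. *)
Lemma support15_counts s : (forall A, A \in s -> mults A \in [:: power1; power5; atom15]) ->
  exists t u p, [/\ size s = t + u + p, fseq_prod s (inZp 1) = 6 * t + p &
                    fseq_prod s (inZp 5) = 6 * u + p].
Proof.
elim: s => [|A s IH] s15; first by exists 0, 0, 0; rewrite fseq_prod_nil !ffunE.
have [|t [u [p [sz m1 m5]]]] := IH; first by move=> B Bs; apply: s15; rewrite in_cons Bs orbT.
rewrite fseq_prod_cons !fseq_mulE m1 m5 /= sz.
have A1 : A (inZp 1) = nth 0 (mults A) 1 by rewrite nth_mults_nat.
have A5 : A (inZp 5) = nth 0 (mults A) 5 by rewrite nth_mults_nat.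
move: (s15 A (mem_head _ _)); rewrite !inE A1 A5 => /or3P [] /eqP -> /=.
- by exists t.+1, u, p; split; lia.
- by exists t, u.+1, p; split; lia.
- by exists t, u, p.+1; split; lia.
Qed.

Lemma lengths_mod4_C6 (B : fseq C6) k k' : supported15 (mults B) ->
  in_length_set B k -> in_length_set B k' -> k = k' %[mod 4].
Proof.
rewrite supported15_mults => /allP suppB.
have counts k'' : in_length_set B k'' -> exists t u p,
    [/\ k'' = t + u + p, B (inZp 1) = 6 * t + p & B (inZp 5) = 6 * u + p].
  move=> [s [<- atoms_s prod_s]]; rewrite -prod_s; apply: support15_counts => A As.
  apply: atom_support15_C6 (atoms_s A As) _; rewrite supported15_mults.
  by apply/allP => i /suppB /eqP Bi; have := fseq_prod_ge (inZp i) As; rewrite prod_s Bi leqn0.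
move=> /counts [t [u [p [-> m1 m5]]]] /counts [t' [u' [p' [-> m1' m5']]]].
lia.
Qed.

(* If a and 3a are lengths of B, then both factorizations are extremal: B
   avoids 0 and the short one consists of copies of 1^6 and 5^6 only. *)
Lemma extremal_support_C6 (B : fseq C6) a : in_length_set B a -> in_length_set B (3 * a) ->
  supported15 (mults B).
Proof.
move=> [sa [sza atoms_a prod_a]] [sb [szb atoms_b prod_b]].
have [pa [Na [sza' lena /andP [_ hia] _ high]]] := factorization_counts atom_len_C6 atoms_a.
have [pb [Nb [szb' lenb /andP [lob _] _ _]]] := factorization_counts atom_len_C6 atoms_b.
rewrite prod_a in sza' lena high; rewrite prod_b in szb' lenb.
have B0 : B 0%R = 0 by lia.
have /high sixes : 6 * pa = Na by lia.
rewrite supported15_mults; apply/allP => i i_in; rewrite -prod_a; apply/eqP.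
apply: fseq_prod_eq0 => A As; case: (sixes A As) => [A0|A6].
  by have := fseq_prod_ge 0%R As; rewrite prod_a B0 A0 ffunE.
have := atom_len6_C6 (atoms_a A As) A6; rewrite !inE => /orP [] /eqP mA;
  by move: i_in; rewrite !inE => /or4P [] /eqP ->; rewrite -nth_mults_nat // mA.
Qed.

(* The interval constraint in C_6: if [a, b] with a < b consists of lengths of
   B, then 2 <= a (as a <= 1 forces B = 1 or B an atom) and b < 3a (b = 3a would
   put B on {1, 5}, where b and b - 1 cannot both be lengths). *)
Lemma intervals_C6 (B : fseq C6) a b : a < b -> (forall k, a <= k <= b -> in_length_set B k) ->
  2 <= a /\ b < 3 * a.
Proof.
move=> ab lenB; have lenBa : in_length_set B a by apply: lenB; rewrite leqnn ltnW.
have lenBb : in_length_set B b by apply: lenB; rewrite leqnn ltnW.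
have ratio := length_ratio (isT : 2 <= 6) atom_len_C6 lenBa lenBb.
have a2 : 2 <= a.
  case: a ab lenB lenBa ratio => [|[|a]] // ab lenB lenBa ratio; first by lia.
  by have := length_one_unique lenBa lenBb; lia.
split => //; rewrite ltn_neqAle; apply/andP; split; last by lia.
apply/eqP => b3a; have := extremal_support_C6 lenBa; rewrite -b3a => /(_ lenBb) supp.
have lenBb' : in_length_set B b.-1 by apply: lenB; lia.
by have := lengths_mod4_C6 supp lenBb lenBb'; lia.
Qed.

Theorem proposition3p3 :
  forall (L : nat -> Prop),
    @in_system_of_sets_of_lengths 'Z_6 L ->
    (exists a b : nat, (a <= b)%N /\ forall k, L k <-> (a <= k <= b)%N) ->
    @in_system_of_sets_of_lengths 'rV['Z_2]_5 L.
Proof.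
move=> L [B [_ LB]] [a [b [ab Lab]]].
apply: (system_ext _ (fun k => iff_sym (Lab k))).
case: (ltnP a b) => [lt_ab|ge_ab]; last by rewrite (_ : b = a); [exact: singleton_C25 | lia].
have [a2 b3a] := intervals_C6 lt_ab (fun k kab => proj1 (LB k) (proj2 (Lab k) kab)).
exact: intervals_C25.
Qed.
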